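(* In the coordinates $(q_1,q_2,p_1,p_2)$ (with $q_1\neq0$) let $\pi'$ be the antisymmetric bivector with $$\pi'^{12}=0,\quad \pi'^{13}=\frac{p_2}{2q_1},\quad \pi'^{14}=1,\quad \pi'^{24}=-\frac{q_2}{q_1},$$ $$\pi'^{23}=\frac{p_1}{2q_1}-\frac{q_1^2}{6}+\frac{t_1}{2}-\frac{p_2^2/4+q_2p_2-q_2^2+t_2}{2q_1^2},\qquad \pi'^{34}=q_1^2-t_1-\frac{p_2^2/4-3q_2^2+t_2}{q_1^2},$$ and $\pi'^{ji}=-\pi'^{ij}$. Then $\pi'$ is a Poisson bivector, it is compatible with the canonical Poisson bivector $\pi$ (i.e. $\pi+\pi'$ is Poisson), and $\{H_1,H_2\}'=0$ for the bracket defined by $\pi'$. Moreover the recursion operator $\pi'\pi^{-1}$ has eigenvalues $u_1,u_2$ (each of multiplicity two), the roots of $$B(u)=u^2-\frac{p_2-2q_2}{2q_1}u+\frac{q_1^2}{6}-\frac{t_1}{2}-\frac{p_1}{2q_1}+\frac{p_2^2/4-q_2^2+t_2}{2q_1^2}.$$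
   Context: $\pi$ denotes the canonical Poisson bivector on $(q_1,q_2,p_1,p_2)$: $\{q_i,p_j\}=\delta_{ij}$, $\{q_1,q_2\}=\{p_1,p_2\}=0$. $t_1,t_2,t_3$ are constants, and $$H_1=\tfrac12p_1p_2-\frac{q_2}{4q_1}p_2^2+q_1^3q_2+\frac{q_2^3}{q_1}-t_1q_1q_2-\frac{t_2q_2}{q_1}-t_3q_1^2,$$ $$H_2=\Big(\frac{p_2^2}{8q_1}+\frac{3t_2-3t_1q_1^2+q_1^4-3q_2^2}{6q_1}\Big)^2+\frac{t_1t_2}{2}-\frac14p_1^2+2t_3q_1q_2-\frac43q_1^2q_2^2 .$$ *)

From HB Require Import structures.
From mathcomp Require Import all_boot all_order all_algebra.
From mathcomp Require Import all_classical all_reals all_analysis.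
Set Implicit Arguments. Unset Strict Implicit. Unset Printing Implicit Defensive.
Import Order.TTheory GRing.Theory Num.Theory.
Import numFieldNormedType.Exports.
Local Open Scope ring_scope.

(* Phase space points x : 'rV[R]_4 with coordinates
   x_0 = q1, x_1 = q2, x_2 = p1, x_3 = p2 (paper indices 1..4 shifted to 0..3). *)
Definition ix (n : nat) (H : (n < 4)%N) : 'I_4 := Ordinal H.
Definition i0 : 'I_4 := @ix 0 erefl.
Definition i1 : 'I_4 := @ix 1 erefl.
Definition i2 : 'I_4 := @ix 2 erefl.
Definition i3 : 'I_4 := @ix 3 erefl.

Section Defs.
Variable R : realType.
Implicit Types (x : 'rV[R]_4).

Definition q1 x := x ord0 i0.
Definition q2 x := x ord0 i1.
Definition p1 x := x ord0 i2.
Definition p2 x := x ord0 i3.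

Definition partial (i : 'I_4) (f : 'rV[R]_4 -> R) x : R :=
  'D_(delta_mx 0 i : 'rV[R]_4) f x.

Definition antisym (u : nat -> nat -> R) : 'M[R]_4 :=
  \matrix_(i, j) (if (i < j)%N then u i j else if (j < i)%N then - u j i else 0).

Definition pi_can : 'M[R]_4 :=
  antisym (fun i j => match i, j with 0%N, 2%N => 1 | 1%N, 3%N => 1 | _, _ => 0 end).

Definition pi' (t1 t2 : R) x : 'M[R]_4 :=
  let Q1 := q1 x in let Q2 := q2 x in let P1 := p1 x in let P2 := p2 x in
  antisym (fun i j => match i, j with
    | 0%N, 1%N => 0
    | 0%N, 2%N => P2 / (2 * Q1)
    | 0%N, 3%N => 1
    | 1%N, 3%N => - (Q2 / Q1)
    | 1%N, 2%N => P1 / (2 * Q1) - Q1 ^+ 2 / 6 + t1 / 2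
              - (P2 ^+ 2 / 4 + Q2 * P2 - Q2 ^+ 2 + t2) / (2 * Q1 ^+ 2)
    | 2%N, 3%N => Q1 ^+ 2 - t1 - (P2 ^+ 2 / 4 - 3 * Q2 ^+ 2 + t2) / Q1 ^+ 2
    | _, _ => 0 end).

(* P is a Poisson bivector on the set D: antisymmetric, and the Schouten
   bracket [P,P] vanishes, written in coordinates (Jacobi identity). *)
Definition is_poisson (P : 'rV[R]_4 -> 'M[R]_4) (D : set 'rV[R]_4) : Prop :=
  forall x, D x ->
    (forall i j, P x i j = - P x j i) /\
    (forall i j k : 'I_4,
      \sum_(l < 4) (P x i l * partial l (fun y => P y j k) x
                  + P x j l * partial l (fun y => P y k i) x
                  + P x k l * partial l (fun y => P y i j) x) = 0).

Definition pbracket (P : 'rV[R]_4 -> 'M[R]_4) (f g : 'rV[R]_4 -> R) x : R :=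
  \sum_(i < 4) \sum_(j < 4) P x i j * partial i f x * partial j g x.

Definition H1 (t1 t2 t3 : R) x : R :=
  let Q1 := q1 x in let Q2 := q2 x in let P1 := p1 x in let P2 := p2 x in
  P1 * P2 / 2 - Q2 / (4 * Q1) * P2 ^+ 2 + Q1 ^+ 3 * Q2 + Q2 ^+ 3 / Q1
  - t1 * Q1 * Q2 - t2 * Q2 / Q1 - t3 * Q1 ^+ 2.

Definition H2 (t1 t2 t3 : R) x : R :=
  let Q1 := q1 x in let Q2 := q2 x in let P1 := p1 x in let P2 := p2 x in
  (P2 ^+ 2 / (8 * Q1) + (3 * t2 - 3 * t1 * Q1 ^+ 2 + Q1 ^+ 4 - 3 * Q2 ^+ 2) / (6 * Q1)) ^+ 2
  + t1 * t2 / 2 - P1 ^+ 2 / 4 + 2 * t3 * Q1 * Q2 - 4 / 3 * Q1 ^+ 2 * Q2 ^+ 2.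

Definition Bpoly (t1 t2 : R) x : {poly R} :=
  let Q1 := q1 x in let Q2 := q2 x in let P1 := p1 x in let P2 := p2 x in
  'X ^+ 2 - ((P2 - 2 * Q2) / (2 * Q1)) *: 'X
  + (Q1 ^+ 2 / 6 - t1 / 2 - P1 / (2 * Q1)
     + (P2 ^+ 2 / 4 - Q2 ^+ 2 + t2) / (2 * Q1 ^+ 2))%:P.

End Defs.

From HB Require Import structures.
From mathcomp Require Import all_boot all_order all_algebra.
From mathcomp Require Import all_classical all_reals all_analysis.
From mathcomp Require Import ring lra.
Import Order.TTheory GRing.Theory Num.Theory.
Import numFieldNormedType.Exports.
Local Open Scope ring_scope.
Local Open Scope classical_set_scope.

(** Every claim is an identity between rational functions of (q1, q2, p1, p2)
    once the first derivatives of the entries of pi', H1 and H2 are computed.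
    The Jacobi expression of a bivector whose derivatives are antisymmetric is
    alternating in its three indices, so it suffices to check it on the four
    triples i < j < k.  Since pi^2 = -1, the recursion operator is -pi' pi, a
    block lower triangular matrix whose two 2x2 diagonal blocks have the same
    trace and determinant; hence its characteristic polynomial is a square. *)

Set Implicit Arguments. Unset Strict Implicit. Unset Printing Implicit Defensive.

Lemma ord4P (i : 'I_4) : i = i0 \/ i = i1 \/ i = i2 \/ i = i3.
Proof.
case: i => [[|[|[|[|n]]]] Hn] //.
- by left; apply: val_inj.
- by right; left; apply: val_inj.
- by right; right; left; apply: val_inj.
- by right; right; right; apply: val_inj.
Qed.

Lemma big_ord4 (V : nmodType) (F : 'I_4 -> V) :
  \sum_(l < 4) F l = F i0 + F i1 + F i2 + F i3.
Proof.
rewrite !big_ord_recl big_ord0 addr0 !addrA.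
by congr (_ + _ + _ + _); congr F; apply: val_inj.
Qed.

Lemma antisymE (R : realType) (u : nat -> nat -> R) (i j : 'I_4) :
  antisym u i j = - antisym u j i.
Proof. by rewrite !mxE; case: ltngtP; rewrite ?opprK ?oppr0. Qed.

Definition nat_mx (T : Type) n (a : nat -> nat -> T) : 'M[T]_n :=
  \matrix_(i, j) a i j.

Lemma det_nat_mxS (T : comNzRingType) n (a : nat -> nat -> T) :
  \det (nat_mx n.+1 a) =
  \sum_(j < n.+1) a 0 j * ((-1) ^+ j * \det (nat_mx n (fun p q => a (bump 0 p) (bump j q)))).
Proof.
rewrite (expand_det_row _ ord0); apply: eq_bigr => j _.
rewrite mxE /cofactor add0n; congr (_ * (_ * \det _)).
by apply/matrixP => i k; rewrite !mxE.
Qed.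

Lemma char_poly_nat_mx (T : comNzRingType) n (a : nat -> nat -> T) :
  char_poly (nat_mx n a) =
  \det (nat_mx n (fun i j => (if i == j then 'X else 0) - (a i j)%:P)).
Proof.
rewrite /char_poly; congr (\det _); apply/matrixP => i j; rewrite !mxE.
by case: (i =P j) => [->|/eqP ij]; rewrite ?eqxx ?mulr1n ?mulr0n // ifN.
Qed.

(* The entries of -pi' pi, with a, b, c, d the entries (1,3), (2,3), (2,4),
   (3,4) of pi'. *)
Definition recursion_entries (T : comNzRingType) (a b c d : T) (i j : nat) : T :=
  match i, j with
   | 0%N, 0%N => a | 0%N, 1%N => 1
   | 1%N, 0%N => b | 1%N, 1%N => c
   | 2%N, 1%N => d | 2%N, 2%N => a | 2%N, 3%N => b
   | 3%N, 0%N => - d | 3%N, 2%N => 1 | 3%N, 3%N => c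
   | _, _ => 0 end.

Lemma char_poly_recursion (T : comNzRingType) (a b c d : T) :
  char_poly (nat_mx 4 (recursion_entries a b c d)) =
  ('X^2 - (a + c) *: 'X + (a * c - b)%:P) ^+ 2.
Proof.
rewrite char_poly_nat_mx !(det_nat_mxS, big_ord_recl, big_ord0, det_mx00) /=.
rewrite !polyCN !polyC0 !polyC1 -!mul_polyC.
ring.
Qed.

Section Recursion.
Variable R : realType.

Lemma invmx_pi_can : invmx (pi_can R) = - pi_can R.
Proof.
have pi_can_sq : pi_can R *m - pi_can R = 1%:M.
  apply/matrixP => i j; rewrite !mxE big_ord4.
  case: (ord4P i) => [->|[->|[->|->]]]; case: (ord4P j) => [->|[->|[->|->]]];
  rewrite /pi_can /antisym !mxE /= ?mulr1n ?mulr0n; ring.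
have [pi_can_unit _] := mulmx1_unit pi_can_sq.
by rewrite -[invmx _]mulmx1 -pi_can_sq mulmxA mulVmx // mul1mx.
Qed.

Lemma mulmx_opp_pi_can (P : 'M[R]_4) :
  (forall i j, P i j = - P j i) -> P i0 i1 = 0 -> P i0 i3 = 1 ->
  P *m - pi_can R =
  nat_mx 4 (recursion_entries (P i0 i2) (P i1 i2) (P i1 i3) (P i2 i3)).
Proof.
move=> P_anti P01 P03.
have P_diag i : P i i = 0 by have := P_anti i i; lra.
apply/matrixP => i j; rewrite !mxE big_ord4.
case: (ord4P i) => [->|[->|[->|->]]]; case: (ord4P j) => [->|[->|[->|->]]];
rewrite /pi_can /antisym !mxE /= ?(P_anti i1 i0, P_anti i2 i0, P_anti i3 i0,
  P_anti i2 i1, P_anti i3 i1, P_anti i3 i2) ?P_diag ?P01 ?P03; ring.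
Qed.

End Recursion.

Section Derivatives.
Variable R : realType.
Implicit Types (f g : 'rV[R]_4 -> R).

Lemma is_derive_coord n (x v : 'rV[R]_n) (i : 'I_n) :
  is_derive x v (fun y : 'rV[R]_n => y ord0 i) (v ord0 i).
Proof.
have quotient_cvg : (fun h : R => h^-1 *: (((fun y : 'rV[R]_n => y ord0 i) \o shift x)
                       (h *: v) - x ord0 i)) @ 0^' --> v ord0 i.
  apply: cvg_near_cst; near=> h.
  rewrite /= !mxE addrK.
  have h_neq0 : h != 0 by near: h; exact: nbhs_dnbhs_neq.
  by rewrite /GRing.scale /= mulrA mulVf ?mul1r.
split; first by apply/cvg_ex; exists (v ord0 i).
exact: cvg_lim quotient_cvg.
Unshelve. all: by end_near. Qed.

Variables (x v : 'rV[R]_4).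

Lemma is_derive_ext f g dg : (forall y, f y = g y) ->
  is_derive x v g dg -> is_derive x v f dg.
Proof. by move=> fg; rewrite (_ : f = g) //; apply/funext. Qed.

Lemma is_derive_add f g df dg : is_derive x v f df -> is_derive x v g dg ->
  is_derive x v (fun y => f y + g y) (df + dg).
Proof. exact: is_deriveD. Qed.

Lemma is_derive_opp f df : is_derive x v f df ->
  is_derive x v (fun y => - f y) (- df).
Proof. exact: is_deriveN. Qed.

Lemma is_derive_mul f g df dg : is_derive x v f df -> is_derive x v g dg ->
  is_derive x v (fun y => f y * g y) (f x * dg + g x * df).
Proof. exact: is_deriveM. Qed.

Lemma is_derive_exp f df n : is_derive x v f df ->
  is_derive x v (fun y => f y ^+ n) (n%:R * f x ^+ n.-1 * df).
Proof.
move=> f_df; apply: is_derive_ext (@is_deriveX _ _ f n x v df f_df) => y.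
by rewrite exprfctE.
Qed.

Lemma is_derive_inv f df : f x != 0 -> is_derive x v f df ->
  is_derive x v (fun y => (f y)^-1) (- (f x ^+ 2)^-1 * df).
Proof.
move=> fx_neq0 [f_derivable f_df]; split; first exact: derivableV.
by rewrite deriveV // f_df.
Qed.

End Derivatives.

Lemma is_derive_partial (R : realType) (l : 'I_4) (f : 'rV[R]_4 -> R) x df :
  is_derive x (delta_mx 0 l) f df -> partial l f x = df.
Proof. by move=> [_ f_df]; rewrite /partial f_df. Qed.

Ltac solve_neq0 := rewrite /= ?(mulf_neq0, expf_neq0, pnatr_eq0, invr_eq0) //.

Ltac solve_is_derive := lazymatch goal with
 | |- is_true (_ != _) => solve_neq0
 | |- is_derive _ _ (fun _ => ?c) _ => apply: is_derive_cst
 | |- is_derive _ _ (fun y => q1 y) _ => apply: is_derive_coord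
 | |- is_derive _ _ (fun y => q2 y) _ => apply: is_derive_coord
 | |- is_derive _ _ (fun y => p1 y) _ => apply: is_derive_coord
 | |- is_derive _ _ (fun y => p2 y) _ => apply: is_derive_coord
 | |- is_derive _ _ (fun y => @?f y + @?g y) _ =>
     apply: (is_derive_add (f:=f) (g:=g)); solve_is_derive
 | |- is_derive _ _ (fun y => - @?f y) _ =>
     apply: (is_derive_opp (f:=f)); solve_is_derive
 | |- is_derive _ _ (fun y => @?f y * @?g y) _ =>
     apply: (is_derive_mul (f:=f) (g:=g)); solve_is_derive
 | |- is_derive _ _ (fun y => (@?f y) ^+ ?n) _ =>
     apply: (is_derive_exp (f:=f)); solve_is_derive
 | |- is_derive _ _ (fun y => (@?f y)^-1) _ =>
     apply: (is_derive_inv (f:=f)); solve_is_derive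
 end.

Ltac prove_is_derive :=
  eapply is_derive_eq; [solve_is_derive | ]; cbv beta; field; solve_neq0.

Section Jacobiator.
Variable R : realFieldType.
Variables (P : 'I_4 -> 'I_4 -> R) (dP : 'I_4 -> 'I_4 -> 'I_4 -> R).
Hypothesis dP_anti : forall j k l, dP j k l = - dP k j l.

(* [dP j k l] stands for the derivative of the entry [P j k] along [x_l]. *)
Definition jacobiator i j k :=
  \sum_(l < 4) (P i l * dP j k l + P j l * dP k i l + P k l * dP i j l).

Lemma jacobiator_cycle i j k : jacobiator i j k = jacobiator j k i.
Proof. by apply: eq_bigr => l _; ring. Qed.

Lemma jacobiator_swap i j k : jacobiator i j k = - jacobiator j i k.
Proof.
rewrite /jacobiator -sumrN; apply: eq_bigr => l _.
rewrite (dP_anti i k) (dP_anti k j) (dP_anti j i); ring.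
Qed.

Lemma jacobiator_diag i k : jacobiator i i k = 0.
Proof. have := jacobiator_swap i i k; lra. Qed.

Lemma jacobiator_eq0 :
  jacobiator i0 i1 i2 = 0 -> jacobiator i0 i1 i3 = 0 ->
  jacobiator i0 i2 i3 = 0 -> jacobiator i1 i2 i3 = 0 ->
  forall i j k, jacobiator i j k = 0.
Proof.
move=> J012 J013 J023 J123 i j k.
case: (ord4P i) => [->|[->|[->|->]]]; case: (ord4P j) => [->|[->|[->|->]]];
case: (ord4P k) => [->|[->|[->|->]]];
first [ exact: jacobiator_diag
      | rewrite jacobiator_cycle; exact: jacobiator_diag
      | rewrite 2!jacobiator_cycle; exact: jacobiator_diag
      | assumption | rewrite jacobiator_cycle; assumption
      | rewrite 2!jacobiator_cycle; assumption
      | rewrite jacobiator_swap; apply/eqP; rewrite oppr_eq0; apply/eqP;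
        first [ assumption | rewrite jacobiator_cycle; assumption
              | rewrite 2!jacobiator_cycle; assumption ] ].
Qed.

End Jacobiator.

Lemma is_poisson_jacobiator (R : realType) (P : 'rV[R]_4 -> 'M[R]_4) D :
  (forall x, D x -> forall i j, P x i j = - P x j i) ->
  (forall x, D x -> forall j k l,
     partial l (fun y => P y j k) x = - partial l (fun y => P y k j) x) ->
  (forall x, D x ->
     let J := jacobiator (P x) (fun j k l => partial l (fun y => P y j k) x) in
     [/\ J i0 i1 i2 = 0, J i0 i1 i3 = 0, J i0 i2 i3 = 0 & J i1 i2 i3 = 0]) ->
  is_poisson P D.
Proof.
move=> P_anti dP_anti J_eq0 x Dx; split; first exact: P_anti.
have [J012 J013 J023 J123] := J_eq0 x Dx.
exact: (jacobiator_eq0 (dP_anti x Dx) J012 J013 J023 J123).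
Qed.

Section Model.
Variable R : realType.
Variables t1 t2 t3 : R.
Implicit Types (x v : 'rV[R]_4).

Definition pi'_derive x v : 'M[R]_4 :=
  let Q1 := q1 x in let Q2 := q2 x in let P1 := p1 x in let P2 := p2 x in
  let v0 := v ord0 i0 in let v1 := v ord0 i1 in
  let v2 := v ord0 i2 in let v3 := v ord0 i3 in
  antisym (fun i j => match i, j with
    | 0%N, 2%N => - P2 / (2 * Q1 ^+ 2) * v0 + (2 * Q1)^-1 * v3
    | 1%N, 3%N => Q2 / Q1 ^+ 2 * v0 - Q1^-1 * v1
    | 1%N, 2%N => (- P1 / (2 * Q1 ^+ 2) - Q1 / 3
                           + (P2 ^+ 2 / 4 + Q2 * P2 - Q2 ^+ 2 + t2) / Q1 ^+ 3) * v0
                  - (P2 - 2 * Q2) / (2 * Q1 ^+ 2) * v1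
                  + (2 * Q1)^-1 * v2
                  - (P2 / 2 + Q2) / (2 * Q1 ^+ 2) * v3
    | 2%N, 3%N => (2 * Q1 + 2 * (P2 ^+ 2 / 4 - 3 * Q2 ^+ 2 + t2) / Q1 ^+ 3) * v0
                  + 6 * Q2 / Q1 ^+ 2 * v1
                  - P2 / (2 * Q1 ^+ 2) * v3
    | _, _ => 0 end).

Definition H1_derive x v : R :=
  let Q1 := q1 x in let Q2 := q2 x in let P1 := p1 x in let P2 := p2 x in
  (Q2 * P2 ^+ 2 / (4 * Q1 ^+ 2) + 3 * Q1 ^+ 2 * Q2 - Q2 ^+ 3 / Q1 ^+ 2 - t1 * Q2
     + t2 * Q2 / Q1 ^+ 2 - 2 * t3 * Q1) * v ord0 i0
  + (- P2 ^+ 2 / (4 * Q1) + Q1 ^+ 3 + 3 * Q2 ^+ 2 / Q1 - t1 * Q1 - t2 / Q1) * v ord0 i1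
  + P2 / 2 * v ord0 i2
  + (P1 / 2 - Q2 * P2 / (2 * Q1)) * v ord0 i3.

Definition H2_derive x v : R :=
  let Q1 := q1 x in let Q2 := q2 x in let P1 := p1 x in let P2 := p2 x in
  let S := P2 ^+ 2 / (8 * Q1) + (3 * t2 - 3 * t1 * Q1 ^+ 2 + Q1 ^+ 4 - 3 * Q2 ^+ 2) / (6 * Q1) in
  let S_q1 := - P2 ^+ 2 / (8 * Q1 ^+ 2) + (- 6 * t1 * Q1 + 4 * Q1 ^+ 3) / (6 * Q1)
             - (3 * t2 - 3 * t1 * Q1 ^+ 2 + Q1 ^+ 4 - 3 * Q2 ^+ 2) / (6 * Q1 ^+ 2) in
  (2 * S * S_q1 + 2 * t3 * Q2 - 8 / 3 * Q1 * Q2 ^+ 2) * v ord0 i0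
  + (2 * S * (- Q2 / Q1) + 2 * t3 * Q1 - 8 / 3 * Q1 ^+ 2 * Q2) * v ord0 i1
  - P1 / 2 * v ord0 i2
  + 2 * S * P2 / (4 * Q1) * v ord0 i3.

Variable x : 'rV[R]_4.
Hypothesis q1_neq0 : q1 x != 0.

Lemma is_derive_pi' v j k :
  is_derive x v (fun y => pi' t1 t2 y j k) (pi'_derive x v j k).
Proof.
case: (ord4P j) => [->|[->|[->|->]]]; case: (ord4P k) => [->|[->|[->|->]]];
(eapply is_derive_ext; first by move=> y; rewrite /pi' /antisym !mxE /=);
rewrite /pi'_derive /antisym !mxE /=; prove_is_derive.
Qed.

Lemma partial_pi' l j k :
  partial l (fun y => pi' t1 t2 y j k) x = pi'_derive x (delta_mx 0 l) j k.
Proof. exact/is_derive_partial/is_derive_pi'. Qed.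

Lemma partial_pi_can_add_pi' l j k :
  partial l (fun y => (pi_can R + pi' t1 t2 y) j k) x =
  pi'_derive x (delta_mx 0 l) j k.
Proof.
apply: is_derive_partial; eapply is_derive_ext; first by move=> y; rewrite mxE.
apply: is_derive_eq (is_derive_add (is_derive_cst _ _ _) (is_derive_pi' _ j k)) _.
by rewrite add0r.
Qed.

Lemma partial_H1 l : partial l (H1 t1 t2 t3) x = H1_derive x (delta_mx 0 l).
Proof.
apply: is_derive_partial; eapply is_derive_ext; first by move=> y; rewrite /H1.
rewrite /H1_derive; prove_is_derive.
Qed.

Lemma partial_H2 l : partial l (H2 t1 t2 t3) x = H2_derive x (delta_mx 0 l).
Proof.
apply: is_derive_partial; eapply is_derive_ext; first by move=> y; rewrite /H2.
rewrite /H2_derive; prove_is_derive.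
Qed.

End Model.

Section Claims.
Variables (R : realType) (t1 t2 t3 : R).

Lemma pi'_poisson : is_poisson (pi' t1 t2) (fun x => q1 x != 0).
Proof.
apply: is_poisson_jacobiator => x q1_neq0.
- exact: antisymE.
- by move=> j k l; rewrite !partial_pi' // antisymE.
- rewrite /jacobiator !big_ord4 !partial_pi' // /pi' /pi'_derive /antisym !mxE /=.
  by rewrite ?mulr1n ?mulr0n; split; field; solve_neq0.
Qed.

Lemma pi_can_add_pi'_poisson :
  is_poisson (fun x => pi_can R + pi' t1 t2 x) (fun x => q1 x != 0).
Proof.
apply: is_poisson_jacobiator => x q1_neq0.
- move=> i j; rewrite [LHS]mxE [in RHS]mxE opprD.
  by rewrite [pi_can R i j]antisymE [pi' t1 t2 x i j]antisymE.
- by move=> j k l; rewrite !partial_pi_can_add_pi' // antisymE.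
- rewrite /jacobiator !big_ord4 !partial_pi_can_add_pi' //.
  rewrite /pi_can /pi' /pi'_derive /antisym !mxE /= ?mulr1n ?mulr0n.
  by split; field; solve_neq0.
Qed.

Lemma pbracket_H1_H2 x : q1 x != 0 ->
  pbracket (pi' t1 t2) (H1 t1 t2 t3) (H2 t1 t2 t3) x = 0.
Proof.
move=> q1_neq0; rewrite /pbracket !big_ord4 !partial_H1 // !partial_H2 //.
rewrite /pi' /H1_derive /H2_derive /antisym !mxE /= ?mulr1n ?mulr0n.
by field; solve_neq0.
Qed.

Lemma char_poly_pi'_recursion x : q1 x != 0 ->
  char_poly (pi' t1 t2 x *m invmx (pi_can R)) = Bpoly t1 t2 x ^+ 2.
Proof.
move=> q1_neq0.
rewrite invmx_pi_can mulmx_opp_pi_can ?char_poly_recursion;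
  try by [exact: antisymE | rewrite /pi' /antisym mxE].
rewrite /Bpoly /pi' /antisym !mxE /=.
by congr (_ ^+ 2); congr (_ - _ *: _ + _%:P); field; solve_neq0.
Qed.

End Claims.

Theorem mainTheorem7 (R : realType) (t1 t2 t3 : R) :
  let D : set 'rV[R]_4 := fun x => q1 x != 0 in
  is_poisson (pi' t1 t2) D /\
  is_poisson (fun x => pi_can R + pi' t1 t2 x) D /\
  (forall x, D x -> pbracket (pi' t1 t2) (H1 t1 t2 t3) (H2 t1 t2 t3) x = 0) /\
  (forall x, D x ->
     char_poly (pi' t1 t2 x *m invmx (pi_can R)) = (Bpoly t1 t2 x) ^+ 2).
Proof.
split; first exact: pi'_poisson.
split; first exact: pi_can_add_pi'_poisson.
split; first exact: pbracket_H1_H2.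
exact: char_poly_pi'_recursion.
Qed.
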